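(* Let $\pi$ be an $r$-homogeneous strongly log-concave distribution with associated matroid $\mathcal{M}=(E,\mathcal{I})$ and weight function $w$, and let $I\in\mathcal{I}$ with $|I|\le r-2$. Let $f:E\setminus I\to\mathbb{R}$ be a function with $\mathbb{E}_{\pi_{I,1}}f=1$. Then $$f^{\top}W_I f\le w(I).$$
   Context: $\pi:2^{[n]}\to\mathbb{R}_{\ge0}$ has generating polynomial $g_\pi(x)=\sum_S\pi(S)\prod_{i\in S}x_i$; it is $r$-homogeneous if its support consists of $r$-sets; a polynomial with nonnegative coefficients is strongly log-concave if for every $J\subseteq[n]$, $\nabla^2\log(\partial_J p)$ is negative semidefinite at the all-ones vector; $\pi$ is strongly log-concave if $g_\pi$ is. The support $\mathcal{B}$ of such $\pi$ is the set of bases of a rank-$r$ matroid $\mathcal{M}=(E,\mathcal{I})$. Fix $Z_r>0$; weights: $w(I)=(r-|I|)!\,Z_r\sum_{B\in\mathcal{B},B\supseteq I}\pi(B)$ for $I\in\mathcal{I}$, and $w(I)=0$ for $I\notin\mathcal{I}$. The distribution $\pi_{I,1}$ on $E\setminus I$ is $\pi_{I,1}(v)=w(I\cup\{v\})/w(I)$ (supported on $v$ with $I\cup\{v\}\in\mathcal{I}$). $W_I$ is the matrix indexed by $E\setminus I$ with $(W_I)_{uv}=w(I\cup\{u,v\})$ for $u\ne v$ and zero diagonal. *)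

From HB Require Import structures.
From mathcomp Require Import all_boot all_order all_algebra.
From mathcomp Require Import mpoly.
Set Implicit Arguments. Unset Strict Implicit. Unset Printing Implicit Defensive.
Import Order.TTheory GRing.Theory Num.Theory.
Local Open Scope ring_scope.

Section Defs.
Variables (R : realFieldType) (n : nat).

Definition gen_poly (pi : {set 'I_n} -> R) : {mpoly R[n]} :=
  \sum_(S : {set 'I_n}) pi S *: \prod_(i in S) 'X_i.

Definition partialJ (J : {set 'I_n}) (p : {mpoly R[n]}) : {mpoly R[n]} :=
  foldr (fun j q => mderiv j q) p (enum J).

Definition ones : 'I_n -> R := fun _ => 1.

Definition hess_log_at_ones (q : {mpoly R[n]}) (i j : 'I_n) : R :=
  (mderiv j (mderiv i q)).@[ones] / q.@[ones]
  - (mderiv i q).@[ones] * (mderiv j q).@[ones] / (q.@[ones] ^+ 2).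

Definition nsd (H : 'I_n -> 'I_n -> R) : Prop :=
  forall v : 'I_n -> R, \sum_i \sum_j v i * H i j * v j <= 0.

(* strongly log-concave: nonnegative coefficients and for every J, the Hessian
   of log (d_J p) at 1 is NSD (vacuous when d_J p is the zero polynomial, where
   log is undefined; the zero polynomial is conventionally log-concave). *)
Definition strongly_log_concave (p : {mpoly R[n]}) : Prop :=
  (forall m, 0 <= p@_m) /\
  forall J : {set 'I_n}, partialJ J p != 0 -> nsd (hess_log_at_ones (partialJ J p)).

Definition homogeneous_dist (r : nat) (pi : {set 'I_n} -> R) : Prop :=
  forall S, pi S != 0 -> #|S| = r.

(* independent sets of the matroid whose bases are the support of pi *)
Definition indep (pi : {set 'I_n} -> R) (I : {set 'I_n}) : bool :=
  [exists B : {set 'I_n}, (pi B != 0) && (I \subset B)].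

Definition weight (r : nat) (Zr : R) (pi : {set 'I_n} -> R) (I : {set 'I_n}) : R :=
  if indep pi I then
    ((r - #|I|)`!)%:R * Zr * \sum_(B : {set 'I_n} | (pi B != 0) && (I \subset B)) pi B
  else 0.

Definition pi_I1 (r : nat) (Zr : R) (pi : {set 'I_n} -> R) (I : {set 'I_n}) (v : 'I_n) : R :=
  weight r Zr pi (v |: I) / weight r Zr pi I.

Definition expect_I1 r Zr pi (I : {set 'I_n}) (f : 'I_n -> R) : R :=
  \sum_(v | v \notin I) pi_I1 r Zr pi I v * f v.

Definition W_I r Zr pi (I : {set 'I_n}) (u v : 'I_n) : R :=
  if u == v then 0 else weight r Zr pi (u |: (v |: I)).

Definition quadW r Zr pi (I : {set 'I_n}) (f : 'I_n -> R) : R :=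
  \sum_(u | u \notin I) \sum_(v | v \notin I) f u * W_I r Zr pi I u v * f v.

End Defs.

(* Write q = sum_(B ⊇ I) pi(B), a_i and H_ij for the values at the all-ones
   point of d_I g, d_i d_I g and d_j d_i d_I g. Since g is multiaffine, these
   are sums of pi over the bases containing I, I + i and I + i + j, so up to
   factorials they are w(I), pi_{I,1} and W_I; r-homogeneity gives the Euler
   identities sum_i a_i = (r-|I|) q and sum_j H_ij = (r-|I|-1) a_i.  Strong
   log-concavity says that H/q - a a^T/q^2 is negative semidefinite.  Tested on
   v = f - 1, which is orthogonal to a because E f = 1, the rank-one part
   vanishes, so v^T H v <= 0; by the Euler identities this is
   f^T H f <= (r-|I|)(r-|I|-1) q, i.e. f^T W_I f <= w(I). *)

From HB Require Import structures.
From mathcomp Require Import all_boot all_order all_algebra.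
From mathcomp Require Import mpoly.
From mathcomp Require Import ring lra zify.
Import Order.TTheory GRing.Theory Num.Theory.
Set Implicit Arguments. Unset Strict Implicit. Unset Printing Implicit Defensive.
Local Open Scope ring_scope.

Section SquareFreeMonomials.
Variables (R : comRingType) (n : nat).

Lemma mderivXU (i j : 'I_n) : ('X_i : {mpoly R[n]})^`M(j) = (i == j)%:R.
Proof.
rewrite mderivX mnm1E; case: eqP => [->|_]; last by rewrite scale0r.
have -> : (U_(j) - U_(j))%MM = 0%MM by apply/mnmP => k; rewrite mnmBE mnm0E subnn.
by rewrite mpolyX0 scale1r.
Qed.

Lemma mderiv_prodX_notin (j : 'I_n) (S : {set 'I_n}) : j \notin S ->
  (\prod_(i in S) ('X_i : {mpoly R[n]}))^`M(j) = 0.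
Proof.
move=> jNS; apply: (big_ind (fun p => p^`M(j) = 0)).
- by rewrite -mpolyC1 mderivC.
- by move=> p p' dp dp'; rewrite mderivM dp dp' mul0r mulr0 addr0.
- by move=> i iS; rewrite mderivXU; case: eqP => // eij; rewrite -eij iS in jNS.
Qed.

Lemma mderiv_prodX (j : 'I_n) (S : {set 'I_n}) :
  (\prod_(i in S) ('X_i : {mpoly R[n]}))^`M(j) =
  if j \in S then \prod_(i in S :\ j) 'X_i else 0.
Proof.
case: ifPn => jS; last exact: mderiv_prodX_notin.
rewrite (bigD1 j) //= (eq_bigl (mem (S :\ j))) => [|i]; last by rewrite !inE andbC.
rewrite mderivM mderivXU eqxx mul1r mderiv_prodX_notin ?mulr0 ?addr0 //.
by rewrite setD11.
Qed.

End SquareFreeMonomials.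

Section Masses.
Variables (R : realFieldType) (n : nat) (pi : {set 'I_n} -> R).

Definition mass_above (J : {set 'I_n}) : R := \sum_(S : {set 'I_n} | J \subset S) pi S.

Definition mass_grad (J : {set 'I_n}) (i : 'I_n) : R :=
  if i \in J then 0 else mass_above (i |: J).

Definition mass_hess (J : {set 'I_n}) (i j : 'I_n) : R :=
  if i \in J then 0 else mass_grad (i |: J) j.

Lemma mass_hess_sym (J : {set 'I_n}) (i j : 'I_n) :
  mass_hess J i j = mass_hess J j i.
Proof.
rewrite /mass_hess /mass_grad !in_setU1 [j == i]eq_sym.
case: (i \in J); case: (j \in J); rewrite ?orbT //=.
by case: eqP => // _; rewrite setUCA.
Qed.

Lemma mass_above_gt0 (J : {set 'I_n}) :
  (forall S, 0 <= pi S) -> indep pi J -> 0 < mass_above J.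
Proof.
move=> pi_ge0 /existsP[B /andP[piB JB]]; rewrite /mass_above (bigD1 B) //=.
by rewrite ltr_pwDl ?sumr_ge0 // lt_def piB pi_ge0.
Qed.

Variable r : nat.
Hypothesis pi_hom : homogeneous_dist r pi.

Lemma sum_mass_grad (J : {set 'I_n}) :
  \sum_i mass_grad J i = (r - #|J|)%:R * mass_above J.
Proof.
rewrite /mass_grad /mass_above.
transitivity (\sum_i \sum_(B : {set 'I_n})
                (if (i \notin J) && (i |: J \subset B) then pi B else 0)).
  apply: eq_bigr => i _; case: (i \in J) => /=; first by rewrite big1.
  by rewrite big_mkcond.
rewrite exchange_big mulr_sumr [RHS]big_mkcond /=; apply: eq_bigr => B _.
case: (boolP (J \subset B)) => JB; last first.
  by apply: big1 => i _; rewrite subUset (negbTE JB) !andbF.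
under eq_bigr do rewrite subUset sub1set JB andbT -in_setD.
rewrite -big_mkcond sumr_const cardsD (setIidPr JB).
by case: (eqVneq (pi B) 0) => [->|/pi_hom ->]; rewrite ?mul0rn ?mulr0 // mulr_natl.
Qed.

Lemma sum_mass_hess (J : {set 'I_n}) (i : 'I_n) :
  \sum_j mass_hess J i j = (r - #|J|).-1%:R * mass_grad J i.
Proof.
rewrite /mass_hess /mass_grad; case: ifPn => iJ; first by rewrite big1 ?mulr0.
by rewrite sum_mass_grad cardsU1 iJ subnS.
Qed.

End Masses.

Section GeneratingPolynomial.
Variables (R : realFieldType) (n : nat) (pi : {set 'I_n} -> R).

Definition gen_poly_above (J : {set 'I_n}) : {mpoly R[n]} :=
  \sum_(S : {set 'I_n} | J \subset S) pi S *: \prod_(i in S :\: J) 'X_i.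

Lemma gen_poly_above0 : gen_poly_above set0 = gen_poly pi.
Proof.
rewrite /gen_poly_above (eq_bigl predT) => [|S]; last by rewrite sub0set.
by apply: eq_bigr => S _; rewrite setD0.
Qed.

Lemma mderiv_gen_poly_above (j : 'I_n) (J : {set 'I_n}) :
  (gen_poly_above J)^`M(j) = if j \in J then 0 else gen_poly_above (j |: J).
Proof.
rewrite /gen_poly_above raddf_sum /=.
under eq_bigr do rewrite mderivZ mderiv_prodX.
case: ifPn => jJ; first by apply: big1 => S _; rewrite inE jJ scaler0.
rewrite big_mkcond [RHS]big_mkcond; apply: eq_bigr => S _ /=.
rewrite inE (negbTE jJ) subUset sub1set.
case: (j \in S); case: (J \subset S); rewrite ?scaler0 //=.
by rewrite setDDl setUC.
Qed.

Lemma partialJ_gen_poly (J : {set 'I_n}) :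
  partialJ J (gen_poly pi) = gen_poly_above J.
Proof.
suff foldrE s : uniq s ->
    foldr (fun j q => q^`M(j)) (gen_poly pi) s = gen_poly_above [set x in s].
  rewrite /partialJ foldrE ?enum_uniq //; congr (gen_poly_above _).
  by apply/setP => i; rewrite inE mem_enum.
elim: s => [_|j s IHs] /=.
  by rewrite -gen_poly_above0; congr (gen_poly_above _); apply/setP => i; rewrite !inE.
move=> /andP[jNs s_uniq]; rewrite IHs // mderiv_gen_poly_above inE (negbTE jNs).
by congr (gen_poly_above _); apply/setP => i; rewrite !inE.
Qed.

Lemma meval_gen_poly_above (J : {set 'I_n}) :
  (gen_poly_above J).@[@ones R n] = mass_above pi J.
Proof.
rewrite /gen_poly_above raddf_sum /=; apply: eq_bigr => S _.
by rewrite mevalZ rmorph_prod big1 ?mulr1 // => i _ /=; rewrite mevalXU.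
Qed.

Lemma meval_mderiv_gen_poly_above (J : {set 'I_n}) (i : 'I_n) :
  ((gen_poly_above J)^`M(i)).@[@ones R n] = mass_grad pi J i.
Proof.
rewrite mderiv_gen_poly_above /mass_grad.
by case: ifP; rewrite ?meval0 ?meval_gen_poly_above.
Qed.

Lemma hess_log_gen_poly_above (J : {set 'I_n}) (i j : 'I_n) :
  hess_log_at_ones (gen_poly_above J) i j =
  mass_hess pi J i j / mass_above pi J
  - mass_grad pi J i * mass_grad pi J j / mass_above pi J ^+ 2.
Proof.
rewrite /hess_log_at_ones /mass_hess !meval_mderiv_gen_poly_above meval_gen_poly_above.
rewrite mderiv_gen_poly_above.
by case: ifP; rewrite ?mderiv0 ?meval0 ?meval_mderiv_gen_poly_above.
Qed.

End GeneratingPolynomial.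

Section QuadraticForms.
Variables (R : realFieldType) (T : finType).
Implicit Types (a f v : T -> R) (H : T -> T -> R).

Lemma quad_form_subr1 H f : (forall i j, H i j = H j i) ->
  \sum_i \sum_j (f i - 1) * H i j * (f j - 1) =
  \sum_i \sum_j f i * H i j * f j - (\sum_i (\sum_j H i j) * f i) *+ 2
  + \sum_i \sum_j H i j.
Proof.
move=> H_sym.
have rowE : \sum_i \sum_j f i * H i j = \sum_i (\sum_j H i j) * f i.
  by apply: eq_bigr => i _; rewrite mulr_suml; apply: eq_bigr => j _; rewrite mulrC.
have colE : \sum_i \sum_j H i j * f j = \sum_i (\sum_j H i j) * f i.
  rewrite exchange_big; apply: eq_bigr => j _; rewrite mulr_suml.
  by apply: eq_bigr => i _; rewrite H_sym.
transitivity (\sum_i \sum_j f i * H i j * f j - \sum_i \sum_j f i * H i j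
              - \sum_i \sum_j H i j * f j + \sum_i \sum_j H i j).
  rewrite -!sumrB -big_split; apply: eq_bigr => i _ /=.
  by rewrite -!sumrB -big_split; apply: eq_bigr => j _ /=; ring.
by rewrite rowE colE mulr2n opprD addrA.
Qed.

Lemma quad_form_rank1_orth H (a v : T -> R) (q : R) :
  \sum_i a i * v i = 0 ->
  \sum_i \sum_j v i * (H i j / q - a i * a j / q ^+ 2) * v j =
  (\sum_i \sum_j v i * H i j * v j) / q.
Proof.
move=> av0; rewrite mulr_suml; apply: eq_bigr => i _; rewrite mulr_suml.
transitivity (\sum_j v i * H i j * v j / q - v i * a i / q ^+ 2 * \sum_j a j * v j).
  by rewrite mulr_sumr -sumrB; apply: eq_bigr => j _; ring.
by rewrite av0 mulr0 subr0.
Qed.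

Lemma quad_form_bound_of_log_hess H a f (q d : R) :
  0 < q -> \sum_i a i = d * q -> (forall i, \sum_j H i j = (d - 1) * a i) ->
  (forall i j, H i j = H j i) -> \sum_i a i * f i = \sum_i a i ->
  \sum_i \sum_j (f i - 1) * (H i j / q - a i * a j / q ^+ 2) * (f j - 1) <= 0 ->
  \sum_i \sum_j f i * H i j * f j <= d * (d - 1) * q.
Proof.
move=> q_gt0 sum_a row_sum H_sym mean_f.
have a_orth : \sum_i a i * (f i - 1) = 0.
  by rewrite -[RHS](subrr (\sum_i a i)) -{1}mean_f -sumrB; apply: eq_bigr => i _; ring.
have rows_f : \sum_i (\sum_j H i j) * f i = (d - 1) * (d * q).
  by rewrite -sum_a -mean_f mulr_sumr; apply: eq_bigr => i _; rewrite row_sum mulrA.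
have rows : \sum_i \sum_j H i j = (d - 1) * (d * q).
  by rewrite -sum_a mulr_sumr; apply: eq_bigr => i _; rewrite row_sum.
rewrite quad_form_rank1_orth // ler_pdivrMr // mul0r quad_form_subr1 // rows_f rows.
lra.
Qed.

End QuadraticForms.

Section Weights.
Variables (R : realFieldType) (n r : nat) (pi : {set 'I_n} -> R) (Zr : R).


Lemma weightE (J : {set 'I_n}) :
  weight r Zr pi J = (r - #|J|)`!%:R * Zr * mass_above pi J.
Proof.
rewrite /weight /mass_above; case: ifP => J_indep.
  congr (_ * _); rewrite big_mkcond [RHS]big_mkcond; apply: eq_bigr => B _ /=.
  by case: eqVneq => [->|]; case: (J \subset B).
rewrite big1 ?mulr0 // => B JB; apply: contraFeq J_indep => piB.
by apply/existsP; exists B; rewrite piB JB.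
Qed.

Lemma quadW_mass (I : {set 'I_n}) (f : 'I_n -> R) :
  quadW r Zr pi I f =
  (r - #|I|).-2`!%:R * Zr * \sum_i \sum_j f i * mass_hess pi I i j * f j.
Proof.
rewrite /quadW mulr_sumr big_mkcond; apply: eq_bigr => u _ /=.
case: (boolP (u \in I)) => uI /=.
  by rewrite /mass_hess uI big1 ?mulr0 // => v _; rewrite mul0r.
rewrite mulr_sumr big_mkcond; apply: eq_bigr => v _ /=.
rewrite /W_I /mass_hess /mass_grad (negbTE uI) in_setU1 [v == u]eq_sym.
case: (boolP (v \in I)) => vI /=; first by rewrite orbT !(mulr0, mul0r).
case: eqVneq => [->|neq_uv] /=; first by rewrite !(mulr0, mul0r).
rewrite weightE !cardsU1 in_setU1 (negbTE neq_uv) (negbTE uI) (negbTE vI) /=.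
by rewrite !subnS setUCA; ring.
Qed.


Hypothesis pi_hom : homogeneous_dist r pi.

Lemma expect_I1_mass (I : {set 'I_n}) (f : 'I_n -> R) :
  Zr != 0 -> (#|I| < r)%N ->
  expect_I1 r Zr pi I f = (\sum_i mass_grad pi I i * f i) / \sum_i mass_grad pi I i.
Proof.
move=> Zr_neq0 I_lt_r; rewrite (sum_mass_grad pi_hom) /expect_I1 mulr_suml big_mkcond.
apply: eq_bigr => v _; rewrite /mass_grad /pi_I1.
case: (boolP (v \in I)) => vI /=; first by rewrite !mul0r.
have [k card_k] : exists k, (r - #|I| = k.+1)%N.
  by exists (r - #|I|).-1; rewrite prednK // subn_gt0.
rewrite !weightE cardsU1 vI subnS card_k factS natrM /=.
case: (eqVneq (mass_above pi I) 0) => [->|mass_neq0].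
  by rewrite !(mulr0, invr0, mul0r).
by field; rewrite mass_neq0 Zr_neq0 nat1r !pnatr_eq0 -!lt0n fact_gt0.
Qed.

End Weights.

Theorem lemma2p4 (R : realFieldType) (n r : nat) (pi : {set 'I_n} -> R) (Zr : R)
  (pi_ge0 : forall S, 0 <= pi S)
  (pi_hom : homogeneous_dist r pi)
  (pi_slc : strongly_log_concave (gen_poly pi))
  (Zr_gt0 : 0 < Zr)
  (I : {set 'I_n}) (I_indep : indep pi I) (I_card : (#|I| + 2 <= r)%N)
  (f : 'I_n -> R) (f_mean : expect_I1 r Zr pi I f = 1) :
  quadW r Zr pi I f <= weight r Zr pi I.
Proof.
have [m card_m] : exists m, (r - #|I| = m.+2)%N by exists (r - #|I| - 2)%N; lia.
have d_pred : (m.+2)%:R - 1 = (m.+1)%:R :> R by rewrite -natr1 addrK.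
have mass_gt0 := mass_above_gt0 pi_ge0 I_indep.
have hess_nsd : nsd (hess_log_at_ones (gen_poly_above pi I)).
  rewrite -partialJ_gen_poly; apply: pi_slc.2; rewrite partialJ_gen_poly.
  by apply: contraTneq mass_gt0 => P0; rewrite -meval_gen_poly_above P0 meval0 ltxx.
have sum_grad := sum_mass_grad pi_hom I; rewrite card_m in sum_grad.
have row_sum i : \sum_j mass_hess pi I i j = ((m.+2)%:R - 1) * mass_grad pi I i.
  by rewrite (sum_mass_hess pi_hom) card_m d_pred.
have mean_f : \sum_i mass_grad pi I i * f i = \sum_i mass_grad pi I i.
  apply: divr1_eq; rewrite -(expect_I1_mass pi_hom f (lt0r_neq0 Zr_gt0)) //; lia.
have := hess_nsd (fun i => f i - 1).
under eq_bigr do under eq_bigr do rewrite hess_log_gen_poly_above.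
move=> /(quad_form_bound_of_log_hess mass_gt0 sum_grad row_sum (mass_hess_sym pi I)).
move=> /(_ mean_f) bound.
have -> : weight r Zr pi I =
          m`!%:R * Zr * ((m.+2)%:R * ((m.+2)%:R - 1) * mass_above pi I).
  by rewrite weightE card_m d_pred !factS !natrM; ring.
by rewrite quadW_mass card_m; apply: ler_wpM2l => //; rewrite mulr_ge0 ?ler0n ?ltW.
Qed.
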